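(* Let $p\ge 1$ and $\chi\in\mathcal W^+_p$. Then there exist numbers $p_k\ge 1$ (possibly unbounded in $k$) and weights $\chi_k\in\mathcal W^+_{p_k}\cap C^\infty(\mathbb R)$, $k\in\mathbb N$, such that $\chi_k\to\chi$ uniformly on compact subsets of $\mathbb R$.
   Context: A normalized Young weight is a function $\chi:\mathbb R\to[0,\infty]$ that is convex, even, lower semicontinuous, with $\chi(0)=0$ and $1\in\partial\chi(1)$ (here $\partial\chi(l)$ is the set of subgradients of $\chi$ at $l$). For $q\ge1$, $\mathcal W^+_q$ denotes the set of finite-valued normalized Young weights satisfying $l\,\chi'(l)\le q\,\chi(l)$ for all $l>0$ and every subgradient $\chi'(l)\in\partial\chi(l)$. *)

From Stdlib Require Import Reals Lra.
From Coquelicot Require Import Coquelicot.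
Open Scope R_scope.

Definition is_subgradient (f : R -> R) (l s : R) : Prop :=
  forall y, f l + s * (y - l) <= f y.

Definition convex_fun (f : R -> R) : Prop :=
  forall x y t, 0 <= t <= 1 ->
    f (t * x + (1 - t) * y) <= t * f x + (1 - t) * f y.

Definition even_fun (f : R -> R) : Prop := forall x, f (- x) = f x.

Definition lsc (f : R -> R) : Prop :=
  forall x eps, 0 < eps -> exists delta, 0 < delta /\
    forall y, Rabs (y - x) < delta -> f x - eps < f y.

(* finite-valued normalized Young weight: chi : R -> [0,oo) *)
Definition normalized_young_weight (chi : R -> R) : Prop :=
  (forall x, 0 <= chi x) /\ convex_fun chi /\ even_fun chi /\ lsc chi /\
  chi 0 = 0 /\ is_subgradient chi 1 1.

Definition W_plus (q : R) (chi : R -> R) : Prop :=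
  normalized_young_weight chi /\
  forall l s, 0 < l -> is_subgradient chi l s -> l * s <= q * chi l.

Definition smooth (f : R -> R) : Prop := forall n x, ex_derive_n f n x.

(* uniform convergence on compact subsets of R (every compact set lies in some [a,b]) *)
Definition cvg_unif_compact (fk : nat -> R -> R) (f : R -> R) : Prop :=
  forall a b eps, 0 < eps -> exists N : nat, forall k, (N <= k)%nat ->
    forall x, a <= x <= b -> Rabs (fk k x - f x) < eps.

(* On a grid of mesh [h], the even convex function [chi] is interpolated by a nonnegative
   combination of ramps [t |-> Rmax (Rabs t) (j h) - j h], the weights being the increments of
   the slopes of [chi] between grid points.  Replacing [Rabs x] by [sqrt (x^2 + e^2)] gives a
   smooth even convex [S] with [S'(u) <= c0 * u] for [u >= 0], so adding a small multiple of
   [u^2] yields a smooth [phi] with [u phi'(u) <= q phi(u)].  As [1] is a subgradient of [chi]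
   at [1] and [phi] is uniformly close to [chi] near [1], the intermediate value theorem gives
   [lam] close to [1] with [lam phi'(lam) = 1]; then [x |-> phi (lam x)] is a smooth weight of
   [W_plus q] close to [chi] on compact sets.  The exponents [q] grow as the approximation
   improves. *)

From Stdlib Require Import Reals Lra Lia ClassicalEpsilon.
From Coquelicot Require Import Coquelicot.
Open Scope R_scope.

(** * Functions of class C^n *)

(* Phrased through [Derive] so that closure under products, inverses and composition follows
   by induction on [n]; Coquelicot's [ex_derive_n] comes without a product rule. *)
Fixpoint Cn (n : nat) (f : R -> R) : Prop :=
  match n with
  | O => True
  | S m => (forall x, ex_derive f x) /\ Cn m (Derive f)
  end.

Lemma Derive_n_Sr k f x : Derive_n f (S k) x = Derive_n (Derive f) k x.
Proof.
  revert x; induction k as [|k IH]; intro x; [reflexivity|].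
  change (Derive (Derive_n f (S k)) x = Derive (Derive_n (Derive f) k) x).
  now apply Derive_ext.
Qed.

Lemma Cn_ex_derive_n n : forall f, Cn n f -> forall k x, (k <= n)%nat -> ex_derive_n f k x.
Proof.
  induction n as [|n IH]; intros f Hf k x Hk.
  - now replace k with O by lia.
  - destruct Hf as [Hd HDf]. destruct k as [|[|k]]; [exact I|apply Hd|].
    change (ex_derive (Derive_n f (S k)) x).
    apply ex_derive_ext with (Derive_n (Derive f) k).
    + intro; symmetry; apply Derive_n_Sr.
    + apply (IH _ HDf (S k)). lia.
Qed.

Lemma smooth_of_Cn f : (forall n, Cn n f) -> smooth f.
Proof. intros Hf n x. now apply (Cn_ex_derive_n n). Qed.

Lemma Cn_ext n : forall f g, (forall x, f x = g x) -> Cn n f -> Cn n g.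
Proof.
  induction n as [|n IH]; intros f g E Hf; [exact I|].
  destruct Hf as [Hd HDf]; split.
  - intro x; now apply ex_derive_ext with f.
  - apply IH with (Derive f); [|exact HDf]. intro; now apply Derive_ext.
Qed.

Lemma Cn_S n f : Cn (S n) f -> Cn n f.
Proof.
  revert f; induction n as [|n IH]; intros f Hf; [exact I|].
  destruct Hf as [Hd HDf]; split; auto.
Qed.

Lemma Cn_const n c : Cn n (fun _ => c).
Proof.
  revert c; induction n as [|n IH]; intro c; [exact I|]. split.
  - intro; apply ex_derive_const.
  - apply Cn_ext with (fun _ => 0); [intro; symmetry; apply Derive_const|apply IH].
Qed.

Lemma Cn_id n : Cn n (fun x => x).
Proof.
  destruct n; [exact I|]. split.
  - intro; apply ex_derive_id.
  - apply Cn_ext with (fun _ => 1); [intro; symmetry; apply Derive_id|apply Cn_const].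
Qed.

Lemma Cn_plus n : forall f g, Cn n f -> Cn n g -> Cn n (fun x => f x + g x).
Proof.
  induction n as [|n IH]; intros f g Hf Hg; [exact I|].
  destruct Hf as [Fd FD], Hg as [Gd GD]; split.
  - intro x; now apply (ex_derive_plus f g).
  - apply Cn_ext with (fun x => Derive f x + Derive g x).
    + intro; symmetry; now apply Derive_plus.
    + now apply IH.
Qed.

Lemma Cn_mult n : forall f g, Cn n f -> Cn n g -> Cn n (fun x => f x * g x).
Proof.
  induction n as [|n IH]; intros f g Hf Hg; [exact I|].
  pose proof (Cn_S _ _ Hf) as Hf'. pose proof (Cn_S _ _ Hg) as Hg'.
  destruct Hf as [Fd FD], Hg as [Gd GD]; split.
  - intro x; now apply ex_derive_mult.
  - apply Cn_ext with (fun x => Derive f x * g x + f x * Derive g x).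
    + intro; symmetry; now apply Derive_mult.
    + apply Cn_plus; now apply IH.
Qed.

Lemma Cn_scal n c f : Cn n f -> Cn n (fun x => c * f x).
Proof. apply Cn_mult, Cn_const. Qed.

Lemma Cn_inv n : forall g, (forall x, g x <> 0) -> Cn n g -> Cn n (fun x => / g x).
Proof.
  induction n as [|n IH]; intros g Hg0 Hg; [exact I|].
  pose proof (Cn_S _ _ Hg) as Hg'.
  destruct Hg as [Gd GD]; split.
  - intro; now apply ex_derive_inv.
  - apply Cn_ext with (fun x => - Derive g x * (/ g x * / g x)).
    + intro x; rewrite Derive_inv by auto. field. auto.
    + apply Cn_mult; [|apply Cn_mult; now apply IH].
      apply Cn_ext with (fun x => -1 * Derive g x); [intro; ring|].
      now apply Cn_scal.
Qed.

Lemma Cn_sqrt n : forall g, (forall x, 0 < g x) -> Cn n g -> Cn n (fun x => sqrt (g x)).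
Proof.
  induction n as [|n IH]; intros g Hg0 Hg; [exact I|].
  pose proof (Cn_S _ _ Hg) as Hg'.
  destruct Hg as [Gd GD].
  assert (Hd : forall x, is_derive (fun x => sqrt (g x)) x (Derive g x / (2 * sqrt (g x)))).
  { intro x. apply is_derive_sqrt; [apply Derive_correct, Gd|apply Hg0]. }
  split.
  - intro x. eexists. apply Hd.
  - apply Cn_ext with (fun x => Derive g x * / (2 * sqrt (g x))).
    + intro x. symmetry. apply is_derive_unique, Hd.
    + apply Cn_mult; [exact GD|]. apply Cn_inv.
      * intro x. generalize (sqrt_lt_R0 _ (Hg0 x)). lra.
      * apply Cn_scal. now apply IH.
Qed.

Lemma Cn_comp n : forall f g, Cn n f -> Cn n g -> Cn n (fun x => f (g x)).
Proof.
  induction n as [|n IH]; intros f g Hf Hg; [exact I|].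
  pose proof (Cn_S _ _ Hg) as Hg'.
  destruct Hf as [Fd FD], Hg as [Gd GD]; split.
  - intro x; now apply ex_derive_comp.
  - apply Cn_ext with (fun x => Derive g x * Derive f (g x)).
    + intro; symmetry; now apply Derive_comp.
    + apply Cn_mult; [exact GD|]. now apply IH.
Qed.

Lemma Cn_comp_affine n f a b : Cn n f -> Cn n (fun x => f (a * x + b)).
Proof.
  intro Hf. apply Cn_comp; [exact Hf|].
  apply Cn_plus; [apply Cn_scal, Cn_id|apply Cn_const].
Qed.

(** * Subgradients and convex functions *)

Lemma is_derive_le_0_at_right_max f x d delta : 0 < delta -> is_derive f x d ->
  (forall t, x < t < x + delta -> f t <= f x) -> d <= 0.
Proof.
  intros Hdelta Hd Hmax. apply Rnot_lt_le; intro Hd0.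
  apply is_derive_Reals in Hd.
  destruct (Hd d Hd0) as [[eta Heta] Hq].
  set (t := Rmin delta eta / 2).
  assert (Ht : 0 < t < Rmin delta eta)
    by (unfold t; generalize (Rmin_pos delta eta Hdelta Heta); lra).
  assert (Hte : Rabs t < eta) by (rewrite Rabs_right by lra; generalize (Rmin_r delta eta); lra).
  specialize (Hq t ltac:(lra) Hte). simpl in Hq.
  assert (Hfx : f (x + t) - f x <= 0) by (generalize (Rmin_l delta eta) (Hmax (x + t)); lra).
  assert (Hneg : (f (x + t) - f x) / t <= 0).
  { unfold Rdiv. apply Rmult_le_0_r; [exact Hfx|]. apply Rlt_le, Rinv_0_lt_compat; lra. }
  apply Rabs_def2 in Hq. lra.
Qed.

Lemma subgradient_le_derive f l s d : is_subgradient f l s -> is_derive f l d -> s <= d.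
Proof.
  intros Hs Hd.
  assert (Hphi : is_derive (fun t => s * t - f t) l (s - d)).
  { apply (is_derive_minus (fun t => s * t) f); [|exact Hd].
    auto_derive; auto; ring. }
  enough (s - d <= 0) by lra.
  apply (is_derive_le_0_at_right_max _ l _ 1 Rlt_0_1 Hphi).
  intros t _. generalize (Hs t). lra.
Qed.

Lemma convex_fun_subgradient f x d : convex_fun f -> is_derive f x d -> is_subgradient f x d.
Proof.
  intros Hf Hd y.
  set (phi := fun t => f (x + t * (y - x)) - t * (f y - f x)).
  assert (Hphi : is_derive phi 0 (d * (y - x) - (f y - f x))).
  { unfold phi. auto_derive.
    - rewrite Rmult_0_l, Rplus_0_r. now exists d.
    - rewrite Rmult_0_l, Rplus_0_r.
      replace (Derive (fun t => f t) x) with d by (symmetry; now apply is_derive_unique). ring. }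
  enough (d * (y - x) - (f y - f x) <= 0) by lra.
  apply (is_derive_le_0_at_right_max phi 0 _ 1 Rlt_0_1 Hphi).
  intros t Ht. unfold phi. rewrite Rmult_0_l, Rplus_0_r, Rmult_0_l.
  replace (x + t * (y - x)) with (t * y + (1 - t) * x) by ring.
  generalize (Hf y x t ltac:(lra)). lra.
Qed.

Lemma lsc_of_ex_derive f : (forall x, ex_derive f x) -> lsc f.
Proof.
  intros Hd x eps Heps.
  assert (Hc : continuity_pt f x).
  { apply continuity_pt_filterlim.
    apply (ex_derive_continuous (K := R_AbsRing) (V := R_NormedModule)), Hd. }
  destruct (Hc eps Heps) as [delta [Hdelta Hclose]].
  exists delta; split; [exact Hdelta|]. intros y Hy.
  destruct (Req_dec y x) as [->|Hne]; [lra|].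
  assert (Hfy : R_dist (f y) (f x) < eps) by (apply Hclose; repeat split; auto).
  unfold R_dist in Hfy. apply Rabs_def2 in Hfy. lra.
Qed.

Lemma convex_fun_ext f g : (forall x, f x = g x) -> convex_fun f -> convex_fun g.
Proof. intros E Hf x y t Ht. rewrite <- !E. now apply Hf. Qed.

Lemma convex_fun_const c : convex_fun (fun _ => c).
Proof. intros x y t Ht. lra. Qed.

Lemma convex_fun_plus f g : convex_fun f -> convex_fun g -> convex_fun (fun x => f x + g x).
Proof. intros Hf Hg x y t Ht. generalize (Hf x y t Ht) (Hg x y t Ht). lra. Qed.

Lemma convex_fun_scal c f : 0 <= c -> convex_fun f -> convex_fun (fun x => c * f x).
Proof.
  intros Hc Hf x y t Ht.
  generalize (Rmult_le_compat_l c _ _ Hc (Hf x y t Ht)). lra.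
Qed.

Lemma convex_fun_comp_affine f a b : convex_fun f -> convex_fun (fun x => f (a * x + b)).
Proof.
  intros Hf x y t Ht.
  replace (a * (t * x + (1 - t) * y) + b) with (t * (a * x + b) + (1 - t) * (a * y + b)) by ring.
  now apply Hf.
Qed.

Lemma convex_fun_sqr : convex_fun (fun x => x * x).
Proof.
  intros x y t Ht.
  assert (0 <= t * (1 - t) * ((x - y) * (x - y))) by (apply Rmult_le_pos; [nra|apply Rle_0_sqr]).
  nra.
Qed.

Lemma convex_even_min_at_0 f : convex_fun f -> even_fun f -> forall x, f 0 <= f x.
Proof.
  intros Hf Hev x. generalize (Hf x (- x) (/ 2) ltac:(lra)).
  replace (/ 2 * x + (1 - / 2) * - x) with 0 by field. rewrite Hev. lra.
Qed.

Lemma convex_fun_chord f x y z : convex_fun f -> x < y < z ->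
  (f y - f x) * (z - y) <= (f z - f y) * (y - x).
Proof.
  intros Hf Hxyz.
  set (t := (z - y) / (z - x)).
  assert (Ht : 0 <= t <= 1).
  { unfold t; split; [apply Rdiv_le_0_compat; lra|].
    apply (Rdiv_le_1 (z - y) (z - x) ltac:(lra)); lra. }
  generalize (Hf x z t Ht).
  replace (t * x + (1 - t) * z) with y by (unfold t; field; lra).
  intro Hy. apply (Rmult_le_compat_r (z - x)) in Hy; [|lra].
  replace ((t * f x + (1 - t) * f z) * (z - x)) with (f x * (z - y) + f z * (y - x)) in Hy
    by (unfold t; field; lra).
  nra.
Qed.

Section EvenConvex.

Variable g : R -> R.
Hypothesis g_convex : convex_fun g.
Hypothesis g_even : even_fun g.
Hypothesis g_0 : g 0 = 0.

Lemma even_convex_ge0 x : 0 <= g x.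
Proof. rewrite <- g_0. now apply convex_even_min_at_0. Qed.

Lemma even_convex_mono x y : 0 <= x <= y -> g x <= g y.
Proof.
  intros Hxy. destruct (Req_dec y 0) as [->|Hy]; [now replace x with 0 by lra|].
  set (t := (1 + x / y) / 2).
  assert (Hxy1 : 0 <= x / y <= 1)
    by (split; [apply Rdiv_le_0_compat|apply (Rdiv_le_1 x y ltac:(lra))]; lra).
  generalize (g_convex y (- y) t ltac:(unfold t; lra)).
  replace (t * y + (1 - t) * - y) with x by (unfold t; field; lra).
  rewrite g_even. lra.
Qed.

Lemma even_convex_lipschitz x y M : 0 <= x <= y -> y <= M -> g y - g x <= g (M + 1) * (y - x).
Proof.
  intros Hxy HyM. destruct (Req_dec x y) as [->|Hne]; [lra|].
  generalize (convex_fun_chord g x y (M + 1) g_convex ltac:(lra))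
    (even_convex_mono x y Hxy) (even_convex_ge0 y). intros Hch Hmono Hgy.
  assert ((g y - g x) * 1 <= (g y - g x) * (M + 1 - y)) by (apply Rmult_le_compat_l; lra).
  assert ((g (M + 1) - g y) * (y - x) <= g (M + 1) * (y - x)) by (apply Rmult_le_compat_r; lra).
  lra.
Qed.

Lemma even_convex_dist x y M : 0 <= x <= M -> 0 <= y <= M ->
  Rabs (g x - g y) <= g (M + 1) * Rabs (x - y).
Proof.
  intros Hx Hy. destruct (Rle_or_lt x y) as [Hxy|Hxy].
  - rewrite Rabs_left1, (Rabs_left1 (x - y)) by (generalize (even_convex_mono x y); lra).
    generalize (even_convex_lipschitz x y M ltac:(lra) ltac:(lra)). lra.
  - rewrite Rabs_right, (Rabs_right (x - y)) by (generalize (even_convex_mono y x); lra).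
    apply even_convex_lipschitz; lra.
Qed.

Lemma even_convex_rescale_dist lam x r : 0 <= x <= r -> Rabs (lam - 1) <= 1 ->
  Rabs (g (lam * x) - g x) <= g (2 * r + 1) * (Rabs (lam - 1) * r).
Proof.
  intros Hx Hlam. apply Rabs_le_between in Hlam.
  eapply Rle_trans; [apply (even_convex_dist _ _ (2 * r)); split; nra|].
  apply Rmult_le_compat_l; [apply even_convex_ge0|].
  replace (lam * x - x) with ((lam - 1) * x) by ring.
  rewrite Rabs_mult, (Rabs_right x) by lra.
  apply Rmult_le_compat_l; [apply Rabs_pos|lra].
Qed.

End EvenConvex.

(** * Smooth ramps *)

Definition soft_abs (e x : R) : R := sqrt (x * x + e * e).
Definition soft_sign (e x : R) : R := x / soft_abs e x.
Definition soft_sign_deriv (e x : R) : R := e * e / (soft_abs e x * (x * x + e * e)).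

Section SoftAbs.

Variable e : R.
Hypothesis e_pos : 0 < e.

Lemma soft_abs_sqr x : soft_abs e x * soft_abs e x = x * x + e * e.
Proof. apply sqrt_sqrt. nra. Qed.

Lemma soft_abs_pos x : 0 < soft_abs e x.
Proof. apply sqrt_lt_R0. nra. Qed.

Lemma soft_abs_even : even_fun (soft_abs e).
Proof. intro x. unfold soft_abs. f_equal. ring. Qed.

Lemma soft_abs_bounds x : Rabs x <= soft_abs e x <= Rabs x + e.
Proof.
  generalize (soft_abs_pos x) (soft_abs_sqr x) (Rabs_pos x). intros.
  assert (Rabs x * Rabs x = x * x) by (rewrite <- Rabs_mult; apply Rabs_right; nra).
  split; nra.
Qed.

Lemma soft_abs_ge x : e <= soft_abs e x.
Proof. generalize (soft_abs_pos x) (soft_abs_sqr x). nra. Qed.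

Lemma soft_abs_convex : convex_fun (soft_abs e).
Proof.
  (* [soft_abs e x] is the Euclidean norm of [(x, e)]. *)
  assert (Hcmod : forall x, soft_abs e x = Cmod (x, e))
    by (intro; unfold soft_abs, Cmod; simpl; f_equal; ring).
  intros x y t Ht. rewrite !Hcmod.
  replace (t * x + (1 - t) * y, e) with (RtoC t * (x, e) + RtoC (1 - t) * (y, e))%C
    by (apply injective_projections; simpl; ring).
  eapply Rle_trans; [apply Cmod_triangle|].
  rewrite !Cmod_mult, !Cmod_R, !Rabs_right by lra. lra.
Qed.

Lemma soft_abs_is_derive x : is_derive (soft_abs e) x (soft_sign e x).
Proof.
  generalize (soft_abs_pos x). unfold soft_sign, soft_abs. intro. auto_derive; [nra|]. field. lra.
Qed.

Lemma soft_sign_odd x : soft_sign e (- x) = - soft_sign e x.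
Proof. unfold soft_sign. rewrite soft_abs_even. field. generalize (soft_abs_pos x). lra. Qed.

Lemma soft_sign_is_derive x : is_derive (soft_sign e) x (soft_sign_deriv e x).
Proof.
  generalize (soft_abs_pos x) (soft_abs_sqr x). unfold soft_sign_deriv, soft_sign, soft_abs.
  intros Hs Hss. auto_derive; [repeat split; nra|].
  set (s := sqrt (x * x + e * e)) in *. rewrite <- Hss.
  replace (e * e) with (s * s - x * x) by lra. field. lra.
Qed.

Lemma soft_sign_deriv_le x : soft_sign_deriv e x <= / e.
Proof.
  unfold soft_sign_deriv. rewrite <- soft_abs_sqr.
  generalize (soft_abs_ge x). set (p := soft_abs e x). intro Hp.
  unfold Rdiv. replace (/ e) with (e * e * / (e * (e * e))) by (field; lra).
  apply Rmult_le_compat_l; [nra|].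
  apply Rinv_le_contravar; [apply Rmult_lt_0_compat; nra|].
  apply Rmult_le_compat; nra.
Qed.

Lemma soft_sign_lipschitz x y : y <= x -> soft_sign e x - soft_sign e y <= (x - y) / e.
Proof.
  intro Hyx. destruct (Req_dec y x) as [->|Hne]; [unfold Rdiv; lra|].
  destruct (MVT_cor2 (soft_sign e) (soft_sign_deriv e) y x) as [c [Hc _]]; [lra| |].
  { intros c _. apply is_derive_Reals, soft_sign_is_derive. }
  rewrite Hc. generalize (soft_sign_deriv_le c). intro. unfold Rdiv. nra.
Qed.

Lemma soft_abs_Cn n : Cn n (soft_abs e).
Proof.
  apply Cn_sqrt; [intro; nra|].
  apply Cn_plus; [apply Cn_mult; apply Cn_id|apply Cn_const].
Qed.

End SoftAbs.

Definition hinge (n : R -> R) (a t : R) : R := (n (t - a) + n (t + a)) / 2 - n a.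

Section Hinge.

Variable n : R -> R.
Variable a : R.

Lemma hinge_even : even_fun n -> even_fun (hinge n a).
Proof.
  intros Hn t. unfold hinge.
  replace (- t - a) with (- (t + a)) by ring. replace (- t + a) with (- (t - a)) by ring.
  rewrite !Hn. field.
Qed.

Lemma hinge_at_0 : even_fun n -> hinge n a 0 = 0.
Proof.
  intro Hn. unfold hinge.
  replace (0 - a) with (- a) by ring. rewrite Hn, Rplus_0_l. field.
Qed.

Lemma hinge_convex : convex_fun n -> convex_fun (hinge n a).
Proof.
  intro Hn.
  apply convex_fun_ext with (fun t => / 2 * n (1 * t + - a) + / 2 * n (1 * t + a) + - n a).
  { intro t. unfold hinge. rewrite !Rmult_1_l. unfold Rminus. field. }
  apply convex_fun_plus; [|apply convex_fun_const].
  apply convex_fun_plus; apply convex_fun_scal, convex_fun_comp_affine; lra || assumption.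
Qed.

Lemma hinge_Cn k : Cn k n -> Cn k (hinge n a).
Proof.
  intro Hn.
  apply Cn_ext with (fun t => / 2 * n (1 * t + - a) + (/ 2 * n (1 * t + a) + - n a)).
  { intro t. unfold hinge. rewrite !Rmult_1_l. unfold Rminus. field. }
  apply Cn_plus; [|apply Cn_plus; [|apply Cn_const]]; apply Cn_scal, Cn_comp_affine, Hn.
Qed.

Lemma hinge_is_derive dn t : (forall x, is_derive n x (dn x)) ->
  is_derive (hinge n a) t ((dn (t - a) + dn (t + a)) / 2).
Proof.
  intro Hn. unfold hinge. auto_derive.
  - split; [now exists (dn (t + - a))|split; [now exists (dn (t + a))|exact I]].
  - rewrite !(is_derive_unique _ _ _ (Hn _)). unfold Rminus. field.
Qed.

Lemma hinge_dist m c t : (forall x, 0 <= n x - m x <= c) ->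
  Rabs (hinge n a t - hinge m a t) <= c.
Proof.
  intro Hnm. unfold hinge.
  generalize (Hnm (t - a)) (Hnm (t + a)) (Hnm a). intros.
  apply Rabs_le. lra.
Qed.

End Hinge.

(* For [a >= 0], [ramp a t = Rmax (Rabs t) a - a]. *)
Notation ramp := (hinge Rabs).
Notation smooth_ramp e := (hinge (soft_abs e)).

Lemma ramp_below a t : 0 <= t <= a -> ramp a t = 0.
Proof.
  intro Ht. unfold hinge.
  rewrite (Rabs_left1 (t - a)), Rabs_right, (Rabs_right a) by lra. field.
Qed.

Lemma ramp_above a t : 0 <= a <= t -> ramp a t = t - a.
Proof.
  intro Ht. unfold hinge.
  rewrite (Rabs_right (t - a)), Rabs_right, (Rabs_right a) by lra. field.
Qed.

Lemma smooth_ramp_dist e a t : 0 < e -> Rabs (smooth_ramp e a t - ramp a t) <= e.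
Proof. intro He. apply hinge_dist. intro x. generalize (soft_abs_bounds e He x). lra. Qed.

Lemma smooth_ramp_slope_le e a t : 0 < e -> 0 <= t ->
  (soft_sign e (t - a) + soft_sign e (t + a)) / 2 <= t / e.
Proof.
  intros He Ht.
  replace (t - a) with (- (a - t)) by ring. rewrite soft_sign_odd by exact He.
  generalize (soft_sign_lipschitz e He (t + a) (a - t) ltac:(lra)).
  replace (t + a - (a - t)) with (2 * t) by ring. unfold Rdiv. lra.
Qed.

(** * Interpolation by ramps *)

Section Ladder.

Variable g : R -> R.
Variable h : R.
Hypothesis g_convex : convex_fun g.
Hypothesis g_even : even_fun g.
Hypothesis g_0 : g 0 = 0.
Hypothesis h_pos : 0 < h.

Definition node (j : nat) : R := INR j * h.

Definition slope (j : nat) : R := (g (node (S j)) - g (node j)) / h.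

Definition weight (j : nat) : R :=
  match j with O => slope 0 | S i => slope (S i) - slope i end.

(* The weights are the increments of the slopes of [g], so [ladder ramp N] is the piecewise
   linear interpolant of [g] at the nodes (lemma [ladder_ramp]). *)
Definition ladder (F : R -> R -> R) (N : nat) (t : R) : R :=
  sum_f_R0 (fun j => weight j * F (node j) t) N.

Lemma node_S j : node (S j) = node j + h.
Proof. unfold node. rewrite S_INR. ring. Qed.

Lemma node_ge0 j : 0 <= node j.
Proof. unfold node. apply Rmult_le_pos; [apply pos_INR|lra]. Qed.

Lemma node_le i j : (i <= j)%nat -> node i <= node j.
Proof. intro Hij. unfold node. apply Rmult_le_compat_r; [lra|now apply le_INR]. Qed.

Lemma slope_ge0 j : 0 <= slope j.
Proof.
  apply Rdiv_le_0_compat; [|exact h_pos].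
  enough (g (node j) <= g (node (S j))) by lra.
  apply even_convex_mono; [exact g_convex|exact g_even|].
  generalize (node_ge0 j) (node_S j). lra.
Qed.

Lemma slope_le_S j : slope j <= slope (S j).
Proof.
  unfold slope. rewrite !node_S.
  generalize (convex_fun_chord g (node j) (node j + h) (node j + h + h) g_convex ltac:(lra)).
  replace (node j + h + h - (node j + h)) with h by ring.
  replace (node j + h - node j) with h by ring. intro Hch.
  unfold Rdiv. apply Rmult_le_compat_r; [apply Rlt_le, Rinv_0_lt_compat, h_pos|nra].
Qed.

Lemma weight_ge0 j : 0 <= weight j.
Proof. destruct j; simpl; [apply slope_ge0|generalize (slope_le_S j); lra]. Qed.

Lemma ladder_le F N t c : (forall j, F (node j) t <= c) -> ladder F N t <= c * slope N.
Proof.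
  intro HF. unfold ladder. induction N as [|N IH]; simpl.
  - rewrite (Rmult_comm c). apply Rmult_le_compat_l; [apply slope_ge0|apply HF].
  - generalize (Rmult_le_compat_l _ _ _ (weight_ge0 (S N)) (HF (S N))).
    simpl. lra.
Qed.

Lemma ladder_dist F G N t c : (forall j, Rabs (F (node j) t - G (node j) t) <= c) ->
  Rabs (ladder F N t - ladder G N t) <= c * slope N.
Proof.
  intro HFG. unfold ladder. induction N as [|N IH]; simpl.
  - rewrite <- Rmult_minus_distr_l, Rabs_mult, Rabs_right, (Rmult_comm c)
      by apply Rle_ge, slope_ge0.
    apply Rmult_le_compat_l; [apply slope_ge0|apply HFG].
  - set (w := slope (S N) - slope N).
    assert (Hw : 0 <= w) by apply (weight_ge0 (S N)).
    replace (_ + w * _ - _) with ((sum_f_R0 (fun j => weight j * F (node j) t) N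
        - sum_f_R0 (fun j => weight j * G (node j) t) N)
        + w * (F (node (S N)) t - G (node (S N)) t)) by ring.
    eapply Rle_trans; [apply Rabs_triang|].
    rewrite Rabs_mult, (Rabs_right w) by lra.
    generalize (Rmult_le_compat_l _ _ _ Hw (HFG (S N))). unfold w. lra.
Qed.

Lemma ladder_even F N : (forall a, even_fun (F a)) -> even_fun (ladder F N).
Proof.
  intros HF t. unfold ladder. apply sum_eq. intros j _. now rewrite HF.
Qed.

Lemma ladder_at_0 F N : (forall a, F a 0 = 0) -> ladder F N 0 = 0.
Proof.
  intro HF. unfold ladder. induction N as [|N IH]; simpl; rewrite ?IH, HF; ring.
Qed.

Lemma ladder_convex F N : (forall a, convex_fun (F a)) -> convex_fun (ladder F N).
Proof.
  intro HF. unfold ladder. induction N as [|N IH]; simpl.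
  - apply convex_fun_scal; [apply slope_ge0|apply HF].
  - apply convex_fun_plus; [exact IH|]. apply convex_fun_scal; [apply (weight_ge0 (S N))|apply HF].
Qed.

Lemma ladder_Cn k F N : (forall a, Cn k (F a)) -> Cn k (ladder F N).
Proof.
  intro HF. unfold ladder. induction N as [|N IH]; simpl.
  - apply Cn_scal, HF.
  - apply Cn_plus; [exact IH|]. apply Cn_scal, HF.
Qed.

Lemma ladder_is_derive F dF N t : (forall a x, is_derive (F a) x (dF a x)) ->
  is_derive (ladder F N) t (ladder dF N t).
Proof.
  intro HF. unfold ladder. induction N as [|N IH]; simpl.
  - apply (is_derive_scal (F (node 0))), HF.
  - apply (is_derive_plus (fun t => sum_f_R0 (fun j => weight j * F (node j) t) N)); [exact IH|].
    apply (is_derive_scal (F (node (S N)))), HF.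
Qed.

Lemma ladder_ramp N j t : (j <= N)%nat -> node j <= t -> ((j < N)%nat -> t <= node (S j)) ->
  ladder ramp N t = g (node j) + slope j * (t - node j).
Proof.
  revert j. unfold ladder. induction N as [|N IH]; intros j HjN Hjt Hup; simpl.
  - assert (j = O) by lia; subst j.
    assert (Hn0 : node 0 = 0) by (unfold node; simpl; ring). rewrite Hn0 in *.
    rewrite ramp_above, g_0 by lra. ring.
  - destruct (Nat.eq_dec j (S N)) as [->|Hne].
    + generalize (node_le N (S N) ltac:(lia)). intro HN.
      rewrite (IH N) by (lia || lra || (intro; lia)).
      rewrite ramp_above by (generalize (node_ge0 (S N)); lra).
      assert (Hslope : slope N * h = g (node (S N)) - g (node N)) by (unfold slope; field; lra).
      rewrite node_S in *. nra.
    + assert (Ht : t <= node (S j)) by (apply Hup; lia).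
      generalize (node_le (S j) (S N) ltac:(lia)) (node_ge0 j). intros.
      rewrite (IH j) by (lia || lra || (intros; apply Hup; lia)).
      rewrite ramp_below by lra. ring.
Qed.

Lemma node_find N t : 0 <= t <= node (S N) -> exists j, (j <= N)%nat /\ node j <= t <= node (S j).
Proof.
  induction N as [|N IH]; intro Ht.
  - exists O. unfold node in *. simpl in *. split; [lia|lra].
  - destruct (Rle_or_lt t (node (S N))) as [Hle|Hlt].
    + destruct IH as [j [Hj Hjt]]; [lra|]. exists j. split; [lia|exact Hjt].
    + exists (S N). split; [lia|lra].
Qed.

Lemma ladder_ramp_approx N t B : 0 <= t <= node (S N) -> t <= B -> h <= 1 ->
  Rabs (ladder ramp N t - g t) <= g (B + 2) * h.
Proof.
  intros Ht HB Hh1. destruct (node_find N t Ht) as [j [Hj Hjt]].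
  rewrite (ladder_ramp N j t) by (auto || lra).
  generalize (slope_ge0 j) (node_ge0 j) (node_S j). intros.
  assert (Hslope : slope j * h = g (node (S j)) - g (node j)) by (unfold slope; field; lra).
  assert (0 <= slope j * (t - node j) <= slope j * h)
    by (split; apply Rmult_le_compat_l || apply Rmult_le_pos; lra).
  generalize (even_convex_mono g g_convex g_even (node j) t ltac:(lra))
    (even_convex_mono g g_convex g_even t (node (S j)) ltac:(lra))
    (even_convex_lipschitz g g_convex g_even g_0 (node j) (node (S j)) (B + 1)
       ltac:(lra) ltac:(lra)).
  replace (B + 1 + 1) with (B + 2) by ring. intros.
  apply Rabs_le. nra.
Qed.

End Ladder.

(** * Smooth approximation *)

Section Smoothing.

Variables (g : R -> R) (h e c : R) (N : nat).
Hypothesis g_convex : convex_fun g.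
Hypothesis g_even : even_fun g.
Hypothesis g_0 : g 0 = 0.
Hypothesis h_pos : 0 < h.
Hypothesis e_pos : 0 < e.
Hypothesis c_pos : 0 < c.

(* The ladder part [S] only satisfies [u * S'(u) <= slope N * u^2 / e]; the term [c * u^2] is
   what turns this into a bound by a multiple of [smoothing u]. *)
Definition smoothing (u : R) : R := ladder g h (smooth_ramp e) N u + c * (u * u).

Let smooth_part := ladder g h (smooth_ramp e) N.

Lemma smoothing_Cn k : Cn k smoothing.
Proof.
  apply Cn_plus.
  - apply ladder_Cn. intro a. apply hinge_Cn, soft_abs_Cn, e_pos.
  - apply Cn_scal, Cn_mult; apply Cn_id.
Qed.

Lemma smoothing_even : even_fun smoothing.
Proof.
  intro u. unfold smoothing. rewrite ladder_even; [f_equal; ring|].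
  intro a. apply hinge_even, soft_abs_even.
Qed.

Lemma smoothing_at_0 : smoothing 0 = 0.
Proof.
  unfold smoothing. rewrite ladder_at_0; [ring|].
  intro a. apply hinge_at_0, soft_abs_even.
Qed.

Lemma smoothing_convex : convex_fun smoothing.
Proof.
  apply convex_fun_plus.
  - apply (ladder_convex g h g_convex g_even h_pos). intro a. apply hinge_convex, soft_abs_convex.
  - apply convex_fun_scal; [lra|apply convex_fun_sqr].
Qed.

Lemma smoothing_ladder_ge0 u : 0 <= smooth_part u.
Proof.
  replace 0 with (smooth_part 0) by (apply ladder_at_0; intro a; apply hinge_at_0, soft_abs_even).
  apply convex_even_min_at_0.
  - apply (ladder_convex g h g_convex g_even h_pos). intro a. apply hinge_convex, soft_abs_convex.
  - apply ladder_even. intro a. apply hinge_even, soft_abs_even.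
Qed.

Lemma smoothing_growth u : 0 < u ->
  u * Derive smoothing u <= (slope g h N / (e * c) + 2) * smoothing u.
Proof.
  intro Hu.
  set (dS := ladder g h (fun a t => (soft_sign e (t - a) + soft_sign e (t + a)) / 2) N).
  assert (Hd : is_derive smoothing u (dS u + c * (2 * u))).
  { apply (is_derive_plus smooth_part (fun u => c * (u * u))).
    - apply ladder_is_derive. intros a x. apply hinge_is_derive, soft_abs_is_derive, e_pos.
    - auto_derive; [exact I|ring]. }
  rewrite (is_derive_unique _ _ _ Hd).
  assert (HdS : dS u <= u / e * slope g h N).
  { apply (ladder_le g h g_convex g_even h_pos). intro j. apply smooth_ramp_slope_le; lra. }
  assert (Hsl : 0 <= slope g h N) by now apply slope_ge0.
  assert (HSu : 0 <= smooth_part u) by apply smoothing_ladder_ge0.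
  assert (Hq : u * dS u <= slope g h N / (e * c) * (c * (u * u))).
  { replace (slope g h N / (e * c) * (c * (u * u))) with (u * (u / e * slope g h N))
      by (field; lra).
    apply Rmult_le_compat_l; lra. }
  assert (0 <= slope g h N / (e * c) * smooth_part u).
  { apply Rmult_le_pos; [apply Rdiv_le_0_compat; [exact Hsl|nra]|exact HSu]. }
  unfold smoothing. fold smooth_part. nra.
Qed.

Lemma smoothing_approx u B : 0 <= u <= node h (S N) -> u <= B -> h <= 1 ->
  Rabs (smoothing u - g u) <= e * slope g h N + g (B + 2) * h + c * (u * u).
Proof.
  intros Hu HB Hh1.
  generalize (ladder_dist g h g_convex g_even h_pos (smooth_ramp e) ramp N u e
    (fun j => smooth_ramp_dist e _ u e_pos))
    (ladder_ramp_approx g h g_convex g_even g_0 h_pos N u B Hu HB Hh1).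
  intros Hsmooth Hramp.
  assert (0 <= c * (u * u)) by (apply Rmult_le_pos; nra).
  unfold smoothing.
  apply Rabs_le_between in Hsmooth, Hramp. apply Rabs_le. lra.
Qed.

End Smoothing.

Lemma mult_div_succ_le a x : 0 <= a -> 0 <= x -> a * (x / (a + 1)) <= x.
Proof.
  intros Ha Hx. replace (a * (x / (a + 1))) with (x * (a / (a + 1))) by (field; lra).
  rewrite <- (Rmult_1_r x) at 2. apply Rmult_le_compat_l; [exact Hx|].
  apply (Rdiv_le_1 a (a + 1) ltac:(lra)). lra.
Qed.

Lemma exists_smooth_convex_approx g B eta : convex_fun g -> even_fun g -> g 0 = 0 ->
  0 <= B -> 0 < eta ->
  exists phi q, (forall k, Cn k phi) /\ convex_fun phi /\ even_fun phi /\ phi 0 = 0 /\ 1 <= q /\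
    (forall u, 0 < u -> u * Derive phi u <= q * phi u) /\
    (forall u, 0 <= u <= B -> Rabs (phi u - g u) <= eta).
Proof.
  intros Hconv Hev Hg0 HB Heta.
  assert (HgB : 0 <= g (B + 2)) by now apply even_convex_ge0.
  (* Each of the three error terms of [smoothing_approx] is at most [eta / 3]. *)
  set (h := Rmin 1 (eta / 3 / (g (B + 2) + 1))).
  assert (Hh : 0 < h) by (apply Rmin_pos; [lra|apply Rdiv_lt_0_compat; lra]).
  destruct (INR_archimed h B Hh) as [N HN].
  assert (Hsl : 0 <= slope g h N) by now apply slope_ge0.
  set (e := eta / 3 / (slope g h N + 1)).
  set (c := eta / 3 / (B * B + 1)).
  assert (He : 0 < e) by (apply Rdiv_lt_0_compat; lra).
  assert (Hc : 0 < c) by (apply Rdiv_lt_0_compat; nra).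
  exists (smoothing g h e c N), (slope g h N / (e * c) + 2).
  split; [|split; [|split; [|split; [|split; [|split]]]]].
  - intro k. now apply smoothing_Cn.
  - now apply smoothing_convex.
  - now apply smoothing_even.
  - now apply smoothing_at_0.
  - assert (0 <= slope g h N / (e * c)) by (apply Rdiv_le_0_compat; [exact Hsl|nra]). lra.
  - intros u Hu. now apply smoothing_growth.
  - intros u Hu.
    assert (Hnode : u <= node h (S N))
      by (generalize (node_le h Hh N (S N) ltac:(lia)); unfold node at 1; lra).
    eapply Rle_trans;
      [apply (smoothing_approx g h e c N Hconv Hev Hg0 Hh He Hc u B); (lra || apply Rmin_l)|].
    generalize (mult_div_succ_le (slope g h N) (eta / 3) Hsl ltac:(lra))
      (mult_div_succ_le (g (B + 2)) (eta / 3) HgB ltac:(lra))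
      (mult_div_succ_le (B * B) (eta / 3) ltac:(nra) ltac:(lra)).
    assert (g (B + 2) * h <= g (B + 2) * (eta / 3 / (g (B + 2) + 1)))
      by (apply Rmult_le_compat_l; [exact HgB|apply Rmin_r]).
    assert (c * (u * u) <= c * (B * B)) by (apply Rmult_le_compat_l; nra).
    fold e c. intros. lra.
Qed.

(** * Normalization at 1 *)

Lemma W_plus_of_derive f df q : convex_fun f -> even_fun f -> f 0 = 0 ->
  (forall x, is_derive f x (df x)) -> df 1 = 1 ->
  (forall l, 0 < l -> l * df l <= q * f l) -> W_plus q f.
Proof.
  intros Hconv Hev Hf0 Hd Hd1 Hgrowth.
  split; [repeat split|].
  - intro x. rewrite <- Hf0. now apply convex_even_min_at_0.
  - exact Hconv.
  - exact Hev.
  - apply lsc_of_ex_derive. intro x. now exists (df x).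
  - exact Hf0.
  - rewrite <- Hd1 at 2. now apply convex_fun_subgradient.
  - intros l s Hl Hs.
    generalize (subgradient_le_derive f l s (df l) Hs (Hd l)) (Hgrowth l Hl). nra.
Qed.

Section UnitSlope.

Variables (chi phi : R -> R) (delta : R).
Hypothesis chi_subgradient : is_subgradient chi 1 1.
Hypothesis phi_convex : convex_fun phi.
Hypothesis phi_C2 : Cn 2 phi.
Hypothesis delta_pos : 0 < delta <= 1 / 2.
Hypothesis phi_near_chi : forall u, 1 - delta <= u <= 1 + delta ->
  Rabs (phi u - chi u) <= delta * delta / 8.

(* [s = -1] and [s = 1] give the two ends of the bracket used in the intermediate value theorem. *)
Lemma unit_slope_bracket s : s * s = 1 ->
  0 < s * ((1 + s * delta) * Derive phi (1 + s * delta) - 1).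
Proof.
  intro Hs. set (x := 1 + s * delta : R). set (d := Derive phi x).
  assert (Hs1 : -1 <= s <= 1) by nra.
  assert (Hx : 1 - delta <= x <= 1 + delta) by (unfold x; split; nra).
  destruct phi_C2 as [Td _].
  generalize (convex_fun_subgradient phi x _ phi_convex (Derive_correct phi x (Td x)) 1)
    (chi_subgradient x) (phi_near_chi 1 ltac:(lra)) (phi_near_chi x Hx).
  fold d. replace (1 - x) with (- (s * delta)) by (unfold x; ring).
  replace (x - 1) with (s * delta) by (unfold x; ring).
  intros HT Hchi H1 Hx'. apply Rabs_le_between in H1, Hx'.
  assert (Hsd : s - delta / 4 <= s * d).
  { apply (Rmult_le_reg_l delta); [lra|]. lra. }
  assert (Hxsd : x * (s - delta / 4) <= x * (s * d)) by (apply Rmult_le_compat_l; lra).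
  replace (s * (x * d - 1)) with (x * (s * d) - s) by ring.
  assert (E : x * (s - delta / 4) - s = delta * (s * s) - delta / 4 - s * (delta * delta) / 4).
  { unfold x. field. }
  rewrite Hs in E. nra.
Qed.

Lemma exists_unit_slope_scale :
  exists lam, 1 - delta <= lam <= 1 + delta /\ lam * Derive phi lam = 1.
Proof.
  destruct phi_C2 as [_ [DTd _]].
  set (m := fun l => l * Derive phi l - 1).
  assert (Hm : continuity m).
  { intro l. apply continuity_pt_filterlim.
    apply (ex_derive_continuous (K := R_AbsRing) (V := R_NormedModule)).
    apply (ex_derive_minus (fun l => l * Derive phi l) (fun _ => 1)); [|apply ex_derive_const].
    apply (ex_derive_mult (fun l => l) (Derive phi)); [apply ex_derive_id|apply DTd]. }
  generalize (unit_slope_bracket (-1) ltac:(ring)) (unit_slope_bracket 1 ltac:(ring)).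
  replace (1 + -1 * delta) with (1 - delta) by ring.
  replace (1 + 1 * delta) with (1 + delta) by ring.
  intros Hlo Hhi.
  destruct (IVT m (1 - delta) (1 + delta) Hm ltac:(lra)) as [lam [Hlam Hmlam]];
    [unfold m; lra|unfold m; lra|].
  exists lam. unfold m in Hmlam. split; [exact Hlam|lra].
Qed.

End UnitSlope.

Lemma even_fun_abs f x : even_fun f -> f (Rabs x) = f x.
Proof. intro Hf. unfold Rabs. destruct (Rcase_abs x); [apply Hf|reflexivity]. Qed.

Lemma W_plus_rescale phi q lam : convex_fun phi -> even_fun phi -> phi 0 = 0 ->
  (forall x, ex_derive phi x) -> (forall u, 0 < u -> u * Derive phi u <= q * phi u) ->
  0 < lam -> lam * Derive phi lam = 1 -> W_plus q (fun x => phi (lam * x)).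
Proof.
  intros Hconv Hev Hphi0 Hd Hgrowth Hlam Hunit.
  apply W_plus_of_derive with (fun x => lam * Derive phi (lam * x)).
  - apply convex_fun_ext with (fun x => phi (lam * x + 0)); [intro; now rewrite Rplus_0_r|].
    now apply convex_fun_comp_affine.
  - intro x. replace (lam * - x) with (- (lam * x)) by ring. apply Hev.
  - now rewrite Rmult_0_r.
  - intro x. apply (is_derive_comp phi (fun x => lam * x)).
    + apply Derive_correct, Hd.
    + auto_derive; [exact I|ring].
  - now rewrite Rmult_1_r.
  - intros l Hl.
    replace (l * (lam * Derive phi (lam * l))) with ((lam * l) * Derive phi (lam * l)) by ring.
    apply Hgrowth, Rmult_lt_0_compat; assumption.
Qed.

Lemma smooth_W_plus_approx chi r eps : convex_fun chi -> even_fun chi -> chi 0 = 0 ->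
  is_subgradient chi 1 1 -> 0 <= r -> 0 < eps ->
  exists q f, 1 <= q /\ W_plus q f /\ smooth f /\
    forall x, Rabs x <= r -> Rabs (f x - chi x) <= eps.
Proof.
  intros Hconv Hev Hchi0 Hsub Hr Heps.
  set (L := chi (2 * r + 1)).
  assert (HL : 0 <= L) by now apply even_convex_ge0.
  set (delta := Rmin (1 / 2) (eps / 2 / (L * r + 1))).
  assert (Hdelta : 0 < delta <= 1 / 2).
  { split; [apply Rmin_pos; [lra|apply Rdiv_lt_0_compat; nra]|apply Rmin_l]. }
  set (eta := Rmin (delta * delta / 8) (eps / 2)).
  assert (Heta : 0 < eta) by (apply Rmin_pos; nra).
  destruct (exists_smooth_convex_approx chi (2 * r + 2) eta Hconv Hev Hchi0 ltac:(lra) Heta)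
    as [phi [q [Hphi [Hpconv [Hpev [Hp0 [Hq [Hgrowth Happrox]]]]]]]].
  destruct (exists_unit_slope_scale chi phi delta Hsub Hpconv (Hphi 2%nat) Hdelta)
    as [lam [Hlam Hunit]].
  { intros u Hu. eapply Rle_trans; [apply Happrox; lra|apply Rmin_l]. }
  exists q, (fun x => phi (lam * x)). split; [exact Hq|split; [|split]].
  - apply W_plus_rescale; try assumption; [apply (proj1 (Hphi 1%nat))|lra].
  - apply smooth_of_Cn. intro k.
    apply Cn_ext with (fun x => phi (lam * x + 0)); [intro; now rewrite Rplus_0_r|].
    apply Cn_comp_affine, Hphi.
  - intros x Hx. rewrite <- (even_fun_abs chi x Hev).
    rewrite <- (even_fun_abs (fun x => phi (lam * x)) x)
      by (intro y; rewrite <- Hpev; f_equal; ring).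
    set (rho := Rabs x) in *. assert (Hrho : 0 <= rho) by apply Rabs_pos.
    assert (Hsmooth : Rabs (phi (lam * rho) - chi (lam * rho)) <= eps / 2).
    { eapply Rle_trans; [apply Happrox; split; nra|apply Rmin_r]. }
    assert (Hlip : Rabs (chi (lam * rho) - chi rho) <= L * (delta * r)).
    { eapply Rle_trans;
        [apply (even_convex_rescale_dist chi Hconv Hev Hchi0 lam rho r); [lra|apply Rabs_le; lra]|].
      apply Rmult_le_compat_l; [exact HL|]. apply Rmult_le_compat_r; [lra|apply Rabs_le; lra]. }
    assert (L * (delta * r) <= eps / 2).
    { replace (L * (delta * r)) with ((L * r) * delta) by ring.
      eapply Rle_trans; [apply Rmult_le_compat_l; [nra|apply Rmin_r]|].
      apply mult_div_succ_le; nra. }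
    replace (phi (lam * rho) - chi rho)
      with ((phi (lam * rho) - chi (lam * rho)) + (chi (lam * rho) - chi rho)) by ring.
    eapply Rle_trans; [apply Rabs_triang|]. lra.
Qed.

Lemma cvg_unif_compact_of_bound fk f :
  (forall k x, Rabs x <= INR k -> Rabs (fk k x - f x) <= / (INR k + 1)) -> cvg_unif_compact fk f.
Proof.
  intros Hbound a b eps Heps.
  set (M := Rmax (Rmax (Rabs a) (Rabs b)) (/ eps)).
  destruct (INR_archimed 1 M Rlt_0_1) as [N HN]. rewrite Rmult_1_r in HN.
  exists N. intros k Hk x Hx.
  assert (HNk : INR N <= INR k) by now apply le_INR.
  assert (Hxk : Rabs x <= INR k).
  { generalize (Rmax_l (Rmax (Rabs a) (Rabs b)) (/ eps)) (Rmax_l (Rabs a) (Rabs b))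
      (Rmax_r (Rabs a) (Rabs b)). fold M. unfold Rabs in *.
    destruct (Rcase_abs x), (Rcase_abs a), (Rcase_abs b); lra. }
  eapply Rle_lt_trans; [exact (Hbound k x Hxk)|].
  rewrite <- (Rinv_inv eps). apply Rinv_lt_contravar.
  - apply Rmult_lt_0_compat; [apply Rinv_0_lt_compat, Heps|generalize (pos_INR k); lra].
  - generalize (Rmax_r (Rmax (Rabs a) (Rabs b)) (/ eps)). fold M. lra.
Qed.

Theorem proposition1p7 (p : R) (chi : R -> R) :
  1 <= p -> W_plus p chi ->
  exists (pk : nat -> R) (chik : nat -> R -> R),
    (forall k, 1 <= pk k) /\
    (forall k, W_plus (pk k) (chik k)) /\
    (forall k, smooth (chik k)) /\
    cvg_unif_compact chik chi.
Proof.
  (* The exponents [pk k] are unconstrained. *)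
  intros _ [[_ [Hconv [Hev [_ [Hchi0 Hsub]]]]] _].
  assert (Happrox : forall k : nat, exists qf : R * (R -> R),
    1 <= fst qf /\ W_plus (fst qf) (snd qf) /\ smooth (snd qf) /\
    forall x, Rabs x <= INR k -> Rabs (snd qf x - chi x) <= / (INR k + 1)).
  { intro k.
    destruct (smooth_W_plus_approx chi (INR k) (/ (INR k + 1)) Hconv Hev Hchi0 Hsub (pos_INR k))
      as [q [f Hqf]]; [apply Rinv_0_lt_compat; generalize (pos_INR k); lra|].
    now exists (q, f). }
  destruct (choice _ Happrox) as [qf Hqf].
  exists (fun k => fst (qf k)), (fun k => snd (qf k)).
  split; [|split; [|split]]; try (intro k; apply (Hqf k)).
  apply cvg_unif_compact_of_bound. intro k. apply (Hqf k).
Qed.
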